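(* Let $\pi$ be a profinite group and $M$ a discrete $\pi$-module. Let $U''\subset U'\subset U$ be closed normal subgroups of $\pi$ and $G=\pi/U$, $G'=\pi/U'$, $G''=\pi/U''$. Suppose that $U$ acts trivially on $M$ and that the restriction maps $\mathrm{H}^2(\pi,M)\to\mathrm{H}^2(U,M)$, $\mathrm{H}^1(U,M)\to\mathrm{H}^1(U',M)$ and $\mathrm{H}^1(U',M)\to\mathrm{H}^1(U'',M)$ are all zero. Then the restriction of the inflation map $\mathrm{H}^2(G'',M)\to\mathrm{H}^2(\pi,M)$ to the image of the inflation map $\mathrm{H}^2(G',M)\to\mathrm{H}^2(G'',M)$ is an isomorphism onto $\mathrm{H}^2(\pi,M)$.
   Context: Cohomology is continuous cohomology of profinite groups with discrete coefficients; $M$ is regarded as a $G$-, $G'$-, $G''$-module via the quotient maps. *)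

From HB Require Import structures.
From mathcomp Require Import all_boot all_order all_algebra.
From mathcomp Require Import boolp classical_sets topology.
Set Implicit Arguments. Unset Strict Implicit. Unset Printing Implicit Defensive.
Import GRing.Theory.
Local Open Scope classical_set_scope.
Local Open Scope ring_scope.

Record profinite_group := ProfiniteGroup {
  pg_sort :> topologicalType;
  pg_mul : pg_sort -> pg_sort -> pg_sort;
  pg_one : pg_sort;
  pg_inv : pg_sort -> pg_sort;
  pg_mulA : associative pg_mul;
  pg_mul1g : left_id pg_one pg_mul;
  pg_mulVg : left_inverse pg_one pg_inv pg_mul;
  pg_mul_cont : continuous (fun p : pg_sort * pg_sort => pg_mul p.1 p.2);
  pg_inv_cont : continuous pg_inv;
  pg_compact : compact [set: pg_sort];
  pg_hausdorff : hausdorff_space pg_sort;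
  pg_totdisc : totally_disconnected [set: pg_sort]
}.

Section Cohomology.
Variables (G : profinite_group) (M : zmodType) (act : G -> M -> M).

Local Notation "x * y" := (pg_mul x y).

(* Discrete G-module structure on M: a group action by additive maps which is
   continuous for the discrete topology on M, i.e. each x |-> x.m is
   locally constant. *)
Definition discrete_module :=
  [/\ forall m, act (pg_one G) m = m,
      forall x y m, act (x * y) m = act x (act y m),
      forall x m1 m2, act x (m1 + m2) = act x m1 + act x m2 &
      forall m x, \forall y \near x, act y m = act x m].

Definition closed_normal_subgroup (U : set G) :=
  [/\ closed U, U (pg_one G),
      forall x y, U x -> U y -> U (x * y),
      forall x, U x -> U (pg_inv x) &
      forall g x, U x -> U (pg_inv g * (x * g))].

(* Inhomogeneous continuous cochains of the group H/N (H a closed subgroup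
   of G, N a closed normal subgroup of G contained in H, acting trivially
   on M) with values in the discrete module M, viewed as functions on H
   (resp. H x H) which are locally constant for the subspace topology and
   invariant under N.  Only values on H matter.  We only use H = G (giving
   the quotients G/N) and N = [set 1] (giving the subgroups H). *)

Definition cochain1 (H N : set G) (f : G -> M) :=
  (forall x, H x -> \forall y \near x, H y -> f y = f x) /\
  (forall x n, H x -> N n -> f (x * n) = f x).

Definition cochain2 (H N : set G) (f : G -> G -> M) :=
  (forall x y, H x -> H y ->
     \forall p \near (x, y), H p.1 -> H p.2 -> f p.1 p.2 = f x y) /\
  (forall x y n, H x -> H y -> N n ->
     f (x * n) y = f x y /\ f x (y * n) = f x y).

Definition cocycle1 (H : set G) (f : G -> M) :=
  forall x y, H x -> H y -> f (x * y) = f x + act x (f y).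

Definition coboundary1 (H : set G) (f : G -> M) :=
  exists m : M, forall x, H x -> f x = act x m - m.

Definition cocycle2 (H : set G) (f : G -> G -> M) :=
  forall x y z, H x -> H y -> H z ->
    act x (f y z) - f (x * y) z + f x (y * z) - f x y = 0.

Definition coboundary2 (H N : set G) (f : G -> G -> M) :=
  exists h : G -> M, cochain1 H N h /\
    forall x y, H x -> H y -> f x y = act x (h y) - h (x * y) + h x.

End Cohomology.

(* Continuous cochains with values in the discrete module M are the locally
   constant ones, so the proof rests on two topological facts about the
   compact Hausdorff totally disconnected space pi: clopen sets form a basis
   (via quasi-components), hence a locally constant function on a closed
   subset extends to pi, and a clopen cover admits a locally constant
   selector.  Surjectivity then normalizes a 2-cocycle f in three steps:
   (1) as res(f) is a coboundary on U, subtract the coboundary of an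
   extension so that f vanishes on U x U; (2) using a locally constant
   selector on the clopen cover by the sets "f(r^-1 y, -) vanishes on U",
   subtract a further coboundary so that f vanishes on pi x U; (3) then
   u |-> f(u, y) is a homomorphism on U, killed by restriction to U', so f
   is inflated from pi/U'.  Injectivity: if an inflated cocycle is d h on
   pi, then h - const is a homomorphism on U', which vanishes on U'', so h
   is U''-invariant. *)

From mathcomp Require Import all_boot all_order all_algebra.
From mathcomp Require Import boolp classical_sets topology.
From HB Require Import structures.
From mathcomp Require Import finmap ssrAC.
Import GRing.Theory.
Local Open Scope classical_set_scope.
Local Open Scope ring_scope.

Set Implicit Arguments. Unset Strict Implicit. Unset Printing Implicit Defensive.

Section LocallyConstant.
Variable T : topologicalType.

Definition locally_constant {V : Type} (f : T -> V) :=
  forall x, \forall y \near x, f y = f x.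

Lemma locally_constant_continuous {V : topologicalType} (f : T -> V) :
  locally_constant f -> continuous f.
Proof.
move=> fLC x B /= nB; apply: filterS (fLC x) => y /= ->; exact: nbhs_singleton.
Qed.

Lemma locally_constant_comp {S : topologicalType} {V : Type}
    (g : S -> T) (f : T -> V) :
  continuous g -> locally_constant f ->
  forall x, \forall y \near x, f (g y) = f (g x).
Proof. by move=> gC fLC x; exact: (gC x _ (fLC (g x))). Qed.

Lemma locally_constant_op2 {A B C : Type} (a : T -> A) (b : T -> B)
    (F : A -> B -> C) :
  locally_constant a -> locally_constant b ->
  locally_constant (fun x => F (a x) (b x)).
Proof.
by move=> aLC bLC x; apply: filterS (filterI (aLC x) (bLC x)) => y [-> ->].
Qed.

Lemma locally_constant_dep {V W : Type} (A : T -> V -> W) (b : T -> V) :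
  (forall m x, \forall y \near x, A y m = A x m) -> locally_constant b ->
  locally_constant (fun x => A x (b x)).
Proof.
move=> ALC bLC x.
by apply: filterS (filterI (bLC x) (ALC (b x) x)) => y [-> ->].
Qed.

Lemma locally_constant_fiber_clopen {V : Type} (f : T -> V) c :
  locally_constant f -> clopen [set x | f x = c].
Proof.
move=> fLC; split.
  rewrite openE => x /= fx; apply: filterS (fLC x) => y /= ->; exact: fx.
rewrite -[X in closed X]setCK; apply: open_closedC.
rewrite openE => x /= nfx; apply: filterS (fLC x) => y /= ->; exact: nfx.
Qed.

Fixpoint first_piece {I V : Type} (A : I -> set T) (val : I -> V) (d : V)
    (s : seq I) x :=
  if s is i :: s' then
    (if `[< A i x >] then val i else first_piece A val d s' x)
  else d.

Lemma first_piece_locally_constant {I : eqType} {V : Type} (A : I -> set T)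
    (val : I -> V) d s :
  (forall i, i \in s -> clopen (A i)) ->
  locally_constant (first_piece A val d s).
Proof.
rewrite /locally_constant; elim: s => [|i s IH] clA x /=; first exact: filterE.
have [oA cA] := clA i (mem_head _ _).
have IHx := IH (fun j js => clA j (mem_behead (js : j \in behead (i :: s)))) x.
have [Aix|nAix] := pselect (A i x).
  rewrite asboolT //; have : nbhs x (A i) by rewrite nbhsE; exists (A i).
  by apply: filterS => y Aiy; rewrite asboolT.
rewrite asboolF //; have nCA : nbhs x (~` A i).
  by rewrite nbhsE; exists (~` A i) => //; split => //; exact: closed_openC.
by apply: filterS (filterI nCA IHx) => y [/= nAy ->]; rewrite asboolF.
Qed.

Lemma first_pieceP {I : eqType} {V : Type} (A : I -> set T) (val : I -> V)
    d s x :
  (exists2 i, i \in s & A i x) ->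
  exists2 i, i \in s & A i x /\ first_piece A val d s x = val i.
Proof.
elim: s => [[i]//|j s IH] [i iS Aix] /=.
have [Ajx|nAjx] := pselect (A j x).
  by rewrite asboolT //; exists j => //; rewrite mem_head.
rewrite asboolF //; have [k ks [Akx ->]] : exists2 k, k \in s &
    A k x /\ first_piece A val d s x = val k.
  apply: IH; move: iS; rewrite in_cons => /orP[/eqP ij|iS]; last by exists i.
  by move: Aix; rewrite ij.
by exists k => //; rewrite in_cons ks orbT.
Qed.

Lemma first_piece_eq {I : eqType} {V : Type} (A : I -> set T) (val : I -> V)
    d s x y :
  (forall i, i \in s -> (A i y <-> A i x)) ->
  first_piece A val d s y = first_piece A val d s x.
Proof.
elim: s => [//|i s IH] Axy /=.
have [Ay_x Ax_y] := Axy i (mem_head _ _).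
rewrite IH; last by move=> j js; apply: Axy; rewrite in_cons js orbT.
have [Aix|nAix] := pselect (A i x); first by rewrite !asboolT //; exact: Ax_y.
by rewrite !asboolF // => /Ay_x.
Qed.

End LocallyConstant.

(* Compactness in terms of finite subcovers; the library states it for
   pointed spaces, so we equip T with an arbitrary point. *)
Section CompactCover.
Variables (T : topologicalType) (t0 : T).

Let pointedT : Type := T.
HB.instance Definition _ := Topological.on pointedT.
HB.instance Definition _ := isPointed.Build pointedT t0.

Lemma compact_cover_compact (A : set T) : compact A -> cover_compact A.
Proof.
by move=> cA; have : @compact pointedT A by []; rewrite compact_cover.
Qed.

End CompactCover.

Section CompactTotallyDisconnected.
Variable T : topologicalType.
Hypotheses (cT : compact [set: T]) (hT : hausdorff_space T)
  (tdT : totally_disconnected [set: T]).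

Definition quasi_component (x : T) :=
  \bigcap_(D in [set D | clopen D /\ D x]) D.

Lemma quasi_component_refl x : quasi_component x x.
Proof. by move=> D [_]. Qed.

(* By compactness, an open neighbourhood of the quasi-component already
   contains a single clopen set around x. *)
Lemma quasi_component_clopen_sub x (W : set T) : open W ->
  quasi_component x `<=` W -> exists D, [/\ clopen D, D x & D `<=` W].
Proof.
move=> oW QW; apply: contrapT => noD.
pose F := filter_from [set D : set T | clopen D /\ D x] (fun D => D `&` ~` W).
have FF : ProperFilter F.
  apply: filter_from_proper; last first.
    move=> D [cD Dx]; apply: contrapT => /set0P/negP; rewrite negbK => /eqP D0.
    apply: noD; exists D; split => // y Dy; apply: contrapT => nWy.
    by have : (D `&` ~` W) y by []; rewrite D0.
  apply: filter_from_filter; first by exists setT; split => //; exact: clopenT.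
  move=> A B [cA Ax] [cB Bx]; exists (A `&` B).
    by split => //; exact: clopenI.
  by move=> y [[Ay By] nWy].
have [z [_ clz]] := cT FF filterT.
have inD D : clopen D -> D x -> (D `&` ~` W) z.
  move=> [oD cD] Dx; have cl : closed (D `&` ~` W).
    by apply: closedI => //; exact: open_closedC.
  by apply: cl => B nB; apply: clz => //; exists D.
have [_ nWz] := inD _ clopenT I.
by apply: nWz; apply: QW => D [cD Dx]; case: (inD D cD Dx).
Qed.

Lemma clopen_split (D V1 V2 : set T) : clopen D -> open V1 -> open V2 ->
  V1 `&` V2 = set0 -> D `<=` V1 `|` V2 -> clopen (D `&` V1).
Proof.
move=> [oD cD] oV1 oV2 V12 DV; split; first exact: openI.
have -> : D `&` V1 = D `&` ~` V2.
  apply/seteqP; split => y [Dy H]; split => //.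
    by move=> V2y; have : (V1 `&` V2) y by []; rewrite V12.
  by case: (DV y Dy).
by apply: closedI => //; exact: open_closedC.
Qed.

Lemma separate_closed (A B : set T) : closed A -> closed B -> A `<=` ~` B ->
  exists V1 V2, [/\ open V1, open V2, A `<=` V1, B `<=` V2 & V1 `&` V2 = set0].
Proof.
move=> cA cB AB.
have nbB : set_nbhs A (~` B).
  move=> a Aa; apply: open_nbhs_nbhs; split; [exact: closed_openC | exact: AB].
have [C nC clC] := compact_normal hT cT cA nbB.
exists C°, (~` closure C); split.
- exact: open_interior.
- by apply: closed_openC; exact: closed_closure.
- by move=> a Aa; exact: nC.
- by move=> b Bb clCb; exact: (clC b clCb).
- apply/seteqP; split => // y [V1y V2y]; apply: V2y.
  by apply: subset_closure; apply: interior_subset.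
Qed.

(* In a compact Hausdorff space quasi-components are connected: a splitting
   of the quasi-component into closed pieces is separated by disjoint open
   sets V1, V2, and a clopen D inside V1 `|` V2 cuts it accordingly. *)
Lemma quasi_component_connected x : connected (quasi_component x).
Proof.
move=> B [b Bb] [O oO BO] [K cK BK].
have cQ : closed (quasi_component x) by apply: closed_bigI => D [[_ cD] _].
pose A := quasi_component x `&` ~` O.
have cB : closed B by rewrite BK; apply: closedI.
have cA : closed A by apply: closedI => //; exact: open_closedC.
have BA : B `<=` ~` A by rewrite BO => a [_ Oa] [_ nOa].
have [V1 [V2 [oV1 oV2 BV1 AV2 V12]]] := separate_closed cB cA BA.
have disj y : V1 y -> V2 y -> False.
  by move=> V1y V2y; have : (V1 `&` V2) y by []; rewrite V12.
have QV : quasi_component x `<=` V1 `|` V2.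
  move=> y Qy; have [Oy|nOy] := pselect (O y); last by right; apply: AV2.
  by left; apply: BV1; rewrite BO.
have [D [cD Dx DV]] := quasi_component_clopen_sub (openU oV1 oV2) QV.
case: (QV x (@quasi_component_refl x)) => [V1x|V2x].
  (* the quasi-component lies in the clopen set D `&` V1, hence in O *)
  have QD1 : quasi_component x `<=` D `&` V1.
    move=> y Qy; apply: Qy.
    by split; [exact: (clopen_split cD oV1 oV2 V12 DV) | split].
  rewrite BO; apply/seteqP; split => y; first by case.
  move=> Qy; split => //; apply: contrapT => nOy.
  by have [_ V1y] := QD1 y Qy; apply: (disj y V1y); apply: AV2.
(* otherwise it lies in D `&` V2, which misses b *)
have cD2 : clopen (D `&` V2).
  by apply: clopen_split oV2 oV1 _ _ => //; [rewrite setIC | rewrite setUC].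
have Qb : quasi_component x b by move: Bb; rewrite BO; case.
have [_ V2b] : (D `&` V2) b by apply: Qb; split.
by case: (disj b (BV1 b Bb) V2b).
Qed.

Lemma clopen_nbhs x (N : set T) : open N -> N x ->
  exists D, [/\ clopen D, D x & D `<=` N].
Proof.
move=> oN Nx; apply: quasi_component_clopen_sub => // y Qy.
have : connected_component [set: T] x y.
  exists (quasi_component x) => //.
  split => //; first exact: quasi_component_refl.
  exact: quasi_component_connected.
by rewrite (tdT (x:=x) I) => ->.
Qed.

Lemma locally_constant_extend (t0 : T) {V : Type} (d : V) (U : set T)
    (h : T -> V) : closed U ->
  (forall u, U u -> \forall y \near u, U y -> h y = h u) ->
  exists K : T -> V, locally_constant K /\ forall u, U u -> K u = h u.
Proof.
move=> cU hLC.
have : forall u, exists D : set T, U u ->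
    [/\ clopen D, D u & forall y, D y -> U y -> h y = h u].
  move=> u; have [Uu|] := pselect (U u); last by exists set0.
  have : nbhs u (fun y => U y -> h y = h u) by exact: hLC.
  rewrite nbhsE => -[N [oN Nu] NS].
  have [D [cD Du DN]] := clopen_nbhs oN Nu.
  by exists D => _; split => // y Dy Uy; apply: NS => //; apply: DN.
move=> /choice [D HD].
have /(compact_cover_compact t0) /(_ T U D) : compact U.
  exact: subclosed_compact cU cT (@subsetT _ U).
case=> [i Ui|u Uu|S SU UD].
- by have [[]] := HD i Ui.
- by exists u => //; have [] := HD u Uu.
have SU' i : i \in S -> U i by move=> /SU /set_mem.
exists (first_piece D h d (enum_fset S)); split.
  by apply: first_piece_locally_constant => i iS; have [] := HD i (SU' i iS).
move=> u Uu; have [i iS Diu] := UD u Uu.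
have [j jS [Dju ->]] := first_pieceP h d (ex_intro2 _ _ i iS Diu).
by have [_ _ hD] := HD j (SU' j jS); rewrite (hD u Dju Uu).
Qed.

Lemma clopen_cover_selector (t0 : T) (Z : T -> set T) :
  (forall r, clopen (Z r)) -> (forall r, Z r r) ->
  exists t : T -> T, [/\ locally_constant t, forall x, Z (t x) x &
    forall x y, (forall r, Z r y <-> Z r x) -> t y = t x].
Proof.
move=> cZ Zrr; move: cT => /(compact_cover_compact t0) /(_ T setT Z).
case=> [i _|x _|S _ TS]; [by case: (cZ i) | by exists x |].
exists (first_piece Z id t0 (enum_fset S)); split.
- by apply: first_piece_locally_constant => i _; exact: cZ.
- move=> x; have [i iS Zix] := TS x I.
  by have [j jS [Zjx ->]] := first_pieceP id t0 (ex_intro2 _ _ i iS Zix).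
- by move=> x y Zxy; apply: first_piece_eq => i _; exact: Zxy.
Qed.

End CompactTotallyDisconnected.

Section ContinuityFacts.

Lemma continuous_pair {S U V : topologicalType} (f : S -> U) (g : S -> V) :
  continuous f -> continuous g -> continuous (fun s => (f s, g s)).
Proof. by move=> fC gC x; apply: cvg_pair; [exact: fC | exact: gC]. Qed.

Lemma continuous_fst {U V : topologicalType} : continuous (@fst U V).
Proof. by move=> [x y]; exact: cvg_fst. Qed.

Lemma continuous_snd {U V : topologicalType} : continuous (@snd U V).
Proof. by move=> [x y]; exact: cvg_snd. Qed.

Lemma continuous_compose {S U V : topologicalType} (f : S -> U) (g : U -> V) :
  continuous f -> continuous g -> continuous (fun x => g (f x)).
Proof. by move=> fC gC x; apply: continuous_comp; [exact: fC | exact: gC]. Qed.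

End ContinuityFacts.

Section ProfiniteGroupFacts.
Variable pi : profinite_group.
Local Notation "x * y" := (pg_mul x y).
Local Notation "x ^-1" := (pg_inv x).
Local Notation one := (pg_one pi).

Lemma pg_mulgV (x : pi) : x * x^-1 = one.
Proof.
rewrite -[x * _]pg_mul1g -[X in X * (x * _)](pg_mulVg x^-1).
by rewrite -pg_mulA [x^-1 * (x * _)]pg_mulA pg_mulVg pg_mul1g pg_mulVg.
Qed.

Lemma pg_mulg1 (x : pi) : x * one = x.
Proof. by rewrite -(pg_mulVg x) pg_mulA pg_mulgV pg_mul1g. Qed.

Lemma pg_mulKVg (x y : pi) : x * (x^-1 * y) = y.
Proof. by rewrite pg_mulA pg_mulgV pg_mul1g. Qed.

Lemma pg_lmul_continuous (a : pi) : continuous (fun y => a * y).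
Proof.
apply: (continuous_compose (f := fun y => (a, y))) (@pg_mul_cont pi).
by apply: continuous_pair; [exact: cst_continuous | move=> x; exact: cvg_id].
Qed.

Lemma pair_left_continuous (a : pi) : continuous (fun y : pi => (y, a)).
Proof.
by apply: continuous_pair; [move=> x; exact: cvg_id | exact: cst_continuous].
Qed.

End ProfiniteGroupFacts.

Section LocallyConstantZmod.
Variables (T : topologicalType) (V : zmodType).

Lemma locally_constant_add (a b : T -> V) :
  locally_constant a -> locally_constant b ->
  locally_constant (fun x => a x + b x).
Proof. exact: locally_constant_op2. Qed.

Lemma locally_constant_opp (a : T -> V) :
  locally_constant a -> locally_constant (fun x => - a x).
Proof.
by move=> aLC; exact: (locally_constant_op2 (fun u _ => - u) aLC aLC).
Qed.

Lemma locally_constant_sub (a b : T -> V) :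
  locally_constant a -> locally_constant b ->
  locally_constant (fun x => a x - b x).
Proof.
by move=> aLC bLC; apply: locally_constant_add => //; exact: locally_constant_opp.
Qed.

Lemma locally_constant_cst (c : V) : locally_constant (fun _ : T => c).
Proof. by move=> x; exact: filterE. Qed.

End LocallyConstantZmod.

Section ZmodIdentities.
Variable M : zmodType.

Lemma cocycle_expr_sub (a1 b1 c1 d1 a2 b2 c2 d2 : M) :
  (a1 - a2) - (b1 - b2) + (c1 - c2) - (d1 - d2) =
  (a1 - b1 + c1 - d1) - (a2 - b2 + c2 - d2).
Proof.
rewrite !opprD !opprK !addrA.
by rewrite [RHS](@GRing.add M).[ACl 1*5*2*6*3*7*4*8].
Qed.

Lemma cocycle_expr_solve (a b c d : M) : a - b + c - d = 0 -> b = a + c - d.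
Proof. by rewrite (@GRing.add M).[ACl (1*3*4)*2] => /subr0_eq <-. Qed.

(* The cocycle expression of a coboundary, after expanding the action. *)
Lemma coboundary_expr (a b c e f g : M) :
  (a - b + c) - (a - e + f) + (b - e + g) - (c - f + g) = 0.
Proof.
rewrite !opprD !opprK !addrA.
rewrite (@GRing.add M).[ACl ((1*4)*(2*7)*(3*10)*(5*8)*(6*11)*(9*12))].
by rewrite ?subrr ?addNr ?addr0.
Qed.

(* If h v - h (uv) + h u = c then u |-> h u - c is additive. *)
Lemma additive_shift (a b c d : M) :
  c = b - a + d -> a - c = (d - c) + (b - c).
Proof.
move=> ->; rewrite !opprD !opprK !addrA.
rewrite [RHS](@GRing.add M).[ACl ((1*4)*(5*6)*(3*2*7*8))].
by rewrite !subrr addr0 add0r.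
Qed.

Lemma addr_cancel (a b d : M) : a = a - b + d -> d = b.
Proof.
rewrite -addrA -{1}[a]addr0 => /addrI /esym /eqP.
by rewrite addrC subr_eq0 => /eqP.
Qed.

End ZmodIdentities.

Section Cochains.
Variables (pi : profinite_group) (M : zmodType) (act : pi -> M -> M).
Hypothesis modM : discrete_module act.
Local Notation "x * y" := (pg_mul x y).
Local Notation "x ^-1" := (pg_inv x).
Local Notation one := (pg_one pi).

Lemma actM x y m : act (x * y) m = act x (act y m). Proof. by case: modM. Qed.
Lemma actD x a b : act x (a + b) = act x a + act x b. Proof. by case: modM. Qed.
Lemma act_locally_constant m : locally_constant (fun y => act y m).
Proof. by case: modM => _ _ _ actLC x; exact: actLC. Qed.

Lemma act0 x : act x 0 = 0.
Proof. by apply: (@addrI _ (act x 0)); rewrite -actD !addr0. Qed.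
Lemma actN x m : act x (- m) = - act x m.
Proof. by apply/eqP; rewrite -addr_eq0 -actD addNr act0. Qed.
Lemma actB x a b : act x (a - b) = act x a - act x b.
Proof. by rewrite actD actN. Qed.

Definition delta1 (k : pi -> M) x y := act x (k y) - k (x * y) + k x.

Lemma delta1_add k l x y :
  delta1 (fun z => k z + l z) x y = delta1 k x y + delta1 l x y.
Proof.
rewrite /delta1 actD opprD !addrA.
by rewrite [LHS](@GRing.add M).[ACl 1*3*5*2*4*6].
Qed.

Lemma delta1_cocycle k : cocycle2 act setT (delta1 k).
Proof.
move=> x y z _ _ _; rewrite /delta1 !actD !actN -actM -pg_mulA.
exact: coboundary_expr.
Qed.

Lemma cocycle2_sub f g : cocycle2 act setT f -> cocycle2 act setT g ->
  cocycle2 act setT (fun x y => f x y - g x y).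
Proof.
move=> fco gco x y z _ _ _; rewrite actB cocycle_expr_sub.
by rewrite (fco x y z I I I) (gco x y z I I I) subrr.
Qed.

Lemma cocycle2_mull f x y z : cocycle2 act setT f ->
  f (x * y) z = act x (f y z) + f x (y * z) - f x y.
Proof. by move=> fco; apply: cocycle_expr_solve; exact: fco. Qed.

Definition locally_constant2 (f : pi -> pi -> M) :=
  locally_constant (fun p : pi * pi => f p.1 p.2).

Lemma cochain2_locally_constant N f :
  cochain2 [set: pi] N f -> locally_constant2 f.
Proof. by move=> [fLC _] [x y]; apply: filterS (fLC x y I I) => p; apply. Qed.

Lemma locally_constant_cochain2 N f : locally_constant2 f ->
  (forall x y n, N n -> f (x * n) y = f x y /\ f x (y * n) = f x y) ->
  cochain2 [set: pi] N f.
Proof.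
move=> fLC finv; split; last by move=> x y n _ _; exact: finv.
by move=> x y _ _; apply: filterS (fLC (x, y)) => p /= -> _ _.
Qed.

Lemma locally_constant_cochain1 N (k : pi -> M) : locally_constant k ->
  (forall x n, N n -> k (x * n) = k x) -> cochain1 [set: pi] N k.
Proof.
move=> kLC kinv; split; last by move=> x n _; exact: kinv.
by move=> x _; apply: filterS (kLC x) => y -> _.
Qed.

Lemma locally_constant2_sub f g : locally_constant2 f -> locally_constant2 g ->
  locally_constant2 (fun x y => f x y - g x y).
Proof. exact: locally_constant_sub. Qed.

Lemma locally_constant2_left f u : locally_constant2 f ->
  locally_constant (fun y => f y u).
Proof.
exact: (locally_constant_comp (f := fun p : pi * pi => f p.1 p.2)
  (pair_left_continuous (a := u))).
Qed.

Lemma delta1_locally_constant k :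
  locally_constant k -> locally_constant2 (delta1 k).
Proof.
move=> kLC; apply: locally_constant_add; first apply: locally_constant_sub.
- apply: (locally_constant_dep (A := fun p (m : M) => act p.1 m)
    (b := fun p => k p.2)).
    move=> m.
    exact: (locally_constant_comp continuous_fst (act_locally_constant m)).
  exact: (locally_constant_comp continuous_snd kLC).
- exact: (locally_constant_comp (@pg_mul_cont pi) kLC).
- exact: (locally_constant_comp continuous_fst kLC).
Qed.

(* For a continuous 2-cochain e and a closed (hence compact) U, the set of y
   with e y u = 0 for all u in U is clopen: closed as an intersection of
   clopen sets, open as the complement of a projection of a compact set. *)
Lemma clopen_vanishing_set (U : set pi) (e : pi -> pi -> M) : closed U ->
  locally_constant2 e -> clopen [set y | forall u, U u -> e y u = 0].
Proof.
move=> cU eLC; split; last first.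
  have -> : [set y | forall u, U u -> e y u = 0] =
      \bigcap_(u in U) [set y | e y u = 0].
    by apply/seteqP; split => y H u Uu; exact: H.
  apply: closed_bigI => u _.
  by case: (locally_constant_fiber_clopen 0 (locally_constant2_left u eLC)).
have -> : [set y | forall u, U u -> e y u = 0] =
    ~` (fst @` ([set p : pi * pi | e p.1 p.2 <> 0] `&` (snd @^-1` U))).
  apply/seteqP; split.
    by move=> y H [[a b] [/= nz Ub] /= ay]; subst a; apply: nz; exact: H.
  move=> y nH u Uu; apply: contrapT => nz; apply: nH; exists (y, u) => //.
apply: closed_openC; apply: compact_closed; first exact: pg_hausdorff.
apply: continuous_compact; first exact: continuous_subspaceT continuous_fst.
apply: (subclosed_compact _ (B := setT)) => //.
- apply: closedI; last by apply: preimage_closed => // p _; exact: continuous_snd.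
  apply: open_closedC.
  by case: (locally_constant_fiber_clopen 0 eLC).
- by rewrite -setXTT; apply: compact_setX; exact: pg_compact.
Qed.

End Cochains.

Section Surjectivity.
Variables (pi : profinite_group) (M : zmodType) (act : pi -> M -> M).
Hypothesis modM : discrete_module act.
Local Notation "x * y" := (pg_mul x y).
Local Notation "x ^-1" := (pg_inv x).
Local Notation one := (pg_one pi).

(* If f restricted to a closed submonoid U is a coboundary, then f agrees
   on U x U with the coboundary of a locally constant cochain on all of pi:
   extend the cochain from U to pi. *)
Lemma coboundary_on_subgroup_extends (U : set pi) (f : pi -> pi -> M) :
  closed U -> (forall u v, U u -> U v -> U (u * v)) ->
  coboundary2 act U [set one] f ->
  exists K, locally_constant K /\
    forall u v, U u -> U v -> f u v = delta1 act K u v.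
Proof.
move=> cU UM [h [[hLC _] fh]].
have [K [KLC KU]] := locally_constant_extend (@pg_compact pi) (@pg_hausdorff pi)
  (@pg_totdisc pi) one 0 cU hLC.
by exists K; split => // u v Uu Uv; rewrite fh // /delta1 !KU //; exact: UM.
Qed.

Section RightNormalization.
Variables (U : set pi) (f : pi -> pi -> M).
Hypotheses (cU : closed U) (U1 : U one)
  (UM : forall u v, U u -> U v -> U (u * v)) (UV : forall u, U u -> U u^-1).
Hypotheses (fLC : locally_constant2 f) (fco : cocycle2 act setT f)
  (fU : forall u v, U u -> U v -> f u v = 0).

Definition right_null_translate r :=
  [set y | forall u, U u -> f (r^-1 * y) u = 0].
Local Notation Z := right_null_translate.

Lemma right_null_translate_clopen r : clopen (Z r).
Proof.
apply: (clopen_vanishing_set (e := fun y u => f (r^-1 * y) u)) cU _.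
apply: (locally_constant_comp (f := fun p : pi * pi => f p.1 p.2)
  (g := fun p : pi * pi => (r^-1 * p.1, p.2))) fLC.
apply: continuous_pair; last exact: continuous_snd.
exact: (continuous_compose continuous_fst (pg_lmul_continuous (a := r^-1))).
Qed.

Lemma right_null_translate_refl r : Z r r.
Proof. by move=> u Uu; rewrite pg_mulVg; exact: fU. Qed.

Lemma right_null_translate_mulr r y u : U u -> Z r y -> Z r (y * u).
Proof.
move=> Uu Zy w Uw; rewrite pg_mulA (cocycle2_mull _ _ _ fco).
by rewrite fU // act0 // add0r !Zy ?subr0 //; exact: UM.
Qed.

Lemma right_null_selector : exists t : pi -> pi, [/\ locally_constant t,
  forall x, Z (t x) x & forall x u, U u -> t (x * u) = t x].
Proof.
have [t [tLC tZ tE]] := clopen_cover_selector (@pg_compact pi) one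
  right_null_translate_clopen right_null_translate_refl.
exists t; split => // x u Uu; apply: tE => r; split; last first.
  exact: right_null_translate_mulr.
move=> /(right_null_translate_mulr (UV Uu)).
by rewrite -pg_mulA pg_mulgV pg_mulg1.
Qed.

(* k0 x := - f (t x, (t x)^-1 x) satisfies k0 (x u) = k0 x - f x u; after
   normalizing k0 at one its coboundary agrees with f on pi x U. *)
Lemma right_normalization : exists k, locally_constant k /\
  forall x u, U u -> f x u = delta1 act k x u.
Proof.
have [t [tLC tZ tU]] := right_null_selector.
pose k0 x := - f (t x) ((t x)^-1 * x).
have k0LC : locally_constant k0.
  apply: locally_constant_opp.
  apply: (locally_constant_comp (f := fun p : pi * pi => f p.1 p.2)
    (g := fun x => (t x, (t x)^-1 * x))) fLC.
  apply: continuous_pair; first exact: locally_constant_continuous.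
  apply: (continuous_compose (f := fun x => ((t x)^-1, x))) (@pg_mul_cont pi).
  apply: continuous_pair; last by move=> x; exact: cvg_id.
  exact: continuous_compose (locally_constant_continuous tLC) (@pg_inv_cont pi).
have k0M x u : U u -> k0 (x * u) = k0 x - f x u.
  move=> Uu; rewrite /k0 (tU x u Uu).
  have -> : f x u = f (t x) ((t x)^-1 * (x * u)) - f (t x) ((t x)^-1 * x).
    rewrite -{1}(pg_mulKVg (t x) x) (cocycle2_mull _ _ _ fco) tZ //.
    by rewrite act0 // add0r pg_mulA.
  by rewrite opprB addKr.
have k0U u : U u -> k0 u = k0 one.
  by move=> Uu; rewrite -[u]pg_mul1g k0M // fU // subr0.
exists (fun x => k0 x - k0 one); split.
  by apply: locally_constant_sub => //; exact: locally_constant_cst.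
move=> x u Uu; rewrite /delta1 k0U // subrr act0 // sub0r k0M //.
rewrite !opprD !opprK !addrA [RHS](@GRing.add M).[ACl 2*((1*4)*(3*5))].
by rewrite addNr subrr !addr0.
Qed.

End RightNormalization.

Section Inflation.
Variables (U U' : set pi) (f : pi -> pi -> M).
Hypotheses (nU : closed_normal_subgroup U) (U'U : U' `<=` U)
  (trivU : forall u m, U u -> act u m = m)
  (res1 : forall g, cochain1 U [set one] g -> cocycle1 act U g ->
     coboundary1 act U' g).
Hypotheses (fLC : locally_constant2 f) (fco : cocycle2 act setT f)
  (fU : forall x u, U u -> f x u = 0).

Lemma right_null_mulr x y u : U u -> f x (y * u) = f x y.
Proof.
move=> Uu; have := @fco x y u I I I.
by rewrite (@fU y u Uu) (@fU (x * y) u Uu) act0 // subrr add0r => /subr0_eq.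
Qed.

(* By normality of U it is also left U-invariant in its second argument. *)
Lemma right_null_mull x v y : U v -> f x (v * y) = f x y.
Proof.
case: nU => _ _ _ _ Uconj Uv.
by rewrite -{1}(pg_mulKVg y (v * y)) right_null_mulr //; exact: Uconj.
Qed.

(* For fixed y, u |-> f u y is a continuous homomorphism U -> M, i.e. a
   1-cocycle for the trivial action; it therefore vanishes on U'. *)
Lemma right_null_left_vanish n y : U' n -> f n y = 0.
Proof.
move=> U'n; pose phi u := f u y.
have phic : cochain1 U [set one] phi.
  split => [x _|x m _ ->]; last by rewrite /phi pg_mulg1.
  by apply: filterS (locally_constant2_left y fLC x) => z E _; exact: E.
have phico : cocycle1 act U phi.
  move=> u v Uu Uv; have := @fco u v y I I I.
  rewrite right_null_mull // (@fU u v Uv) /phi trivU //.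
  move=> /cocycle_expr_solve ->.
  by rewrite subr0 addrC.
have [m phim] := res1 phic phico.
by have := phim n U'n; rewrite trivU ?subrr //; exact: U'U.
Qed.

Lemma right_null_inflated : cochain2 [set: pi] U' f.
Proof.
apply: locally_constant_cochain2 fLC _ => x y n U'n.
split; last exact: right_null_mulr (U'U U'n).
have Un := U'U U'n; have := @fco x n y I I I.
rewrite right_null_left_vanish // act0 // (@fU x n Un) right_null_mull //.
by rewrite subr0 sub0r addrC => /subr0_eq ->.
Qed.

End Inflation.

Lemma inflation_surjective (U U' : set pi) :
  closed_normal_subgroup U -> U' `<=` U ->
  (forall u m, U u -> act u m = m) ->
  (forall f, cochain2 [set: pi] [set one] f -> cocycle2 act [set: pi] f ->
     coboundary2 act U [set one] f) ->
  (forall g, cochain1 U [set one] g -> cocycle1 act U g ->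
     coboundary1 act U' g) ->
  forall f, cochain2 [set: pi] [set one] f -> cocycle2 act [set: pi] f ->
  exists g, [/\ cochain2 [set: pi] U' g, cocycle2 act [set: pi] g &
    coboundary2 act [set: pi] [set one] (fun x y => f x y - g x y)].
Proof.
move=> nU U'U trivU res2 res1 f fc fco; have [cU U1 UM UV _] := nU.
have fLC := cochain2_locally_constant fc.
have [K [KLC fK]] := coboundary_on_subgroup_extends cU UM (res2 f fc fco).
pose f1 x y := f x y - delta1 act K x y.
have f1LC := locally_constant2_sub fLC (delta1_locally_constant modM KLC).
have f1co := cocycle2_sub modM fco (delta1_cocycle modM K).
have f1U u v : U u -> U v -> f1 u v = 0 by move=> Uu Uv; rewrite /f1 fK ?subrr.
have [k [kLC f1k]] := right_normalization cU U1 UM UV f1LC f1co f1U.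
pose g x y := f1 x y - delta1 act k x y.
have gU x u : U u -> g x u = 0 by move=> Uu; rewrite /g /f1 f1k ?subrr.
have gco := cocycle2_sub modM f1co (delta1_cocycle modM k).
exists g; split => //.
  exact: (right_null_inflated nU U'U trivU res1
    (locally_constant2_sub f1LC (delta1_locally_constant modM kLC)) gco gU).
exists (fun x => K x + k x); split.
  apply: locally_constant_cochain1 (locally_constant_add KLC kLC) _.
  by move=> x n ->; rewrite pg_mulg1.
move=> x y _ _; rewrite -[RHS]/(delta1 act (fun z => K z + k z) x y).
rewrite delta1_add // /g /f1.
by rewrite !opprD !opprK !addrA subrr add0r.
Qed.

End Surjectivity.

Section Injectivity.
Variables (pi : profinite_group) (M : zmodType) (act : pi -> M -> M).
Hypothesis modM : discrete_module act.
Local Notation "x * y" := (pg_mul x y).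
Local Notation one := (pg_one pi).

Lemma inflated_cochain2_const (N : set pi) (f : pi -> pi -> M) u v :
  cochain2 [set: pi] N f -> N u -> N v -> f u v = f one one.
Proof.
move=> [_ finv] Nu Nv; rewrite -[u]pg_mul1g (finv one v u I I Nu).1.
by rewrite -[v]pg_mul1g (finv one one v I I Nv).2.
Qed.

Lemma cocycle2_right_one f x : cocycle2 act [set: pi] f ->
  f x one = act x (f one one).
Proof.
move=> fco; have := fco x one one I I I.
by rewrite !pg_mulg1 subrK => /subr0_eq ->.
Qed.

(* If g = d h, then h - g(1,1) is a
   homomorphism on U', so h is constant on U'' and hence U''-invariant. *)
Lemma inflation_injective (U' U'' : set pi) :
  U'' `<=` U' -> (forall u m, U' u -> act u m = m) ->
  (forall f, cochain1 U' [set one] f -> cocycle1 act U' f ->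
     coboundary1 act U'' f) ->
  forall g1 g2, cochain2 [set: pi] U' g1 -> cocycle2 act [set: pi] g1 ->
    cochain2 [set: pi] U' g2 -> cocycle2 act [set: pi] g2 ->
    coboundary2 act [set: pi] [set one] (fun x y => g1 x y - g2 x y) ->
    coboundary2 act [set: pi] U'' (fun x y => g1 x y - g2 x y).
Proof.
move=> U''U' trivU' res1 g1 g2 g1c g1co g2c g2co [h [[hLC _] gh]].
pose g x y := g1 x y - g2 x y.
have gc : cochain2 [set: pi] U' g.
  apply: locally_constant_cochain2 => [|x y n U'n].
    exact: locally_constant2_sub (cochain2_locally_constant g1c)
      (cochain2_locally_constant g2c).
  have [g1l g1r] := g1c.2 x y n I I U'n; have [g2l g2r] := g2c.2 x y n I I U'n.
  by rewrite /g g1l g1r g2l g2r.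
have gco : cocycle2 act setT g := cocycle2_sub modM g1co g2co.
pose c := g one one.
pose h' u := h u - c.
have h'c : cochain1 U' [set one] h'.
  split=> [x _|x n _ ->]; last by rewrite /h' pg_mulg1.
  by apply: filterS (hLC x I) => y hy _; rewrite /h' (hy I).
have h'co : cocycle1 act U' h'.
  move=> u v U'u U'v; rewrite trivU' //; apply: additive_shift.
  by rewrite /c -(inflated_cochain2_const gc U'u U'v) /g gh // trivU'.
have [m h'm] := res1 h' h'c h'co.
have hU'' w : U'' w -> h w = c.
  move=> U''w; apply: subr0_eq; have := h'm w U''w.
  by rewrite trivU' ?subrr //; exact: U''U'.
exists h; split; last exact: gh.
split=> [x _|x n _ U''n].
  by apply: filterS (hLC x I) => y hy _; exact: hy.
have := gh x n I I; rewrite -[n in g1 x n]pg_mul1g -[n in g2 x n]pg_mul1g.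
rewrite -/(g x (one * n)) (gc.2 x one n I I (U''U' n U''n)).2.
by rewrite cocycle2_right_one // hU'' // => /addr_cancel.
Qed.

End Injectivity.

Unset Implicit Arguments.

Theorem proposition4p2 (pi : profinite_group) (M : zmodType)
  (act : pi -> M -> M) (U U' U'' : set pi) :
  discrete_module act ->
  closed_normal_subgroup U -> closed_normal_subgroup U' ->
  closed_normal_subgroup U'' ->
  U'' `<=` U' -> U' `<=` U ->
  (* U acts trivially on M *)
  (forall u m, U u -> act u m = m) ->
  (* res : H^2(pi, M) -> H^2(U, M) is zero *)
  (forall f, cochain2 [set: pi] [set pg_one pi] f ->
     cocycle2 act [set: pi] f -> coboundary2 act U [set pg_one pi] f) ->
  (* res : H^1(U, M) -> H^1(U', M) is zero *)
  (forall f, cochain1 U [set pg_one pi] f -> cocycle1 act U f ->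
     coboundary1 act U' f) ->
  (* res : H^1(U', M) -> H^1(U'', M) is zero *)
  (forall f, cochain1 U' [set pg_one pi] f -> cocycle1 act U' f ->
     coboundary1 act U'' f) ->
  (* surjectivity onto H^2(pi, M) of inf_{G''}^{pi} restricted to
     the image of inf_{G'}^{G''} *)
  (forall f, cochain2 [set: pi] [set pg_one pi] f ->
     cocycle2 act [set: pi] f ->
     exists g, [/\ cochain2 [set: pi] U' g, cocycle2 act [set: pi] g &
       coboundary2 act [set: pi] [set pg_one pi] (fun x y => f x y - g x y)])
  /\
  (* injectivity on the image of inf_{G'}^{G''} *)
  (forall g1 g2, cochain2 [set: pi] U' g1 -> cocycle2 act [set: pi] g1 ->
     cochain2 [set: pi] U' g2 -> cocycle2 act [set: pi] g2 ->
     coboundary2 act [set: pi] [set pg_one pi] (fun x y => g1 x y - g2 x y) ->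
     coboundary2 act [set: pi] U'' (fun x y => g1 x y - g2 x y)).
Proof.
move=> modM nU _ _ U''U' U'U trivU res2 res1 res1'; split.
- exact: (inflation_surjective modM nU U'U trivU res2 res1).
- by apply: (inflation_injective modM U''U' _ res1') => u m U'u; exact/trivU/U'U.
Qed.
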